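(* Let $G$ be a group and let $x_1,x_2,x_3,g_1,g_2,g_3\in G$ be such that $$1=[x_1,x_2,x_3]=[x_1g_1,x_2g_2,x_3g_3]=[x_1g_1,x_2g_2,x_3]=[x_1g_1,x_2,x_3g_2]$$ $$=[x_1g_1,x_2,x_3]=[x_1g_1,x_2,x_3g_3]=[x_1,x_2,x_3g_1]=[x_1,x_2g_2,x_3g_1]$$ $$=[x_1,x_2g_2,x_3]=[x_1,x_2,x_3g_2]=[x_1,x_2g_2,x_3g_3]=[x_1,x_2,x_3g_3].$$ Then $[g_1,g_2,g_3]=1$.
   Context: Commutators: $[x,y]=x^{-1}y^{-1}xy$ and $[x,y,z]=[[x,y],z]$. *)

Set Implicit Arguments.

Definition is_group (T : Type) (mul : T -> T -> T) (one : T) (inv : T -> T) : Prop :=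
  (forall x y z, mul x (mul y z) = mul (mul x y) z) /\
  (forall x, mul one x = x) /\ (forall x, mul x one = x) /\
  (forall x, mul (inv x) x = one) /\ (forall x, mul x (inv x) = one).

Definition comm (T : Type) (mul : T -> T -> T) (inv : T -> T) (x y : T) : T :=
  mul (mul (mul (inv x) (inv y)) x) y.

Definition comm3 (T : Type) (mul : T -> T -> T) (inv : T -> T) (x y z : T) : T :=
  comm mul inv (comm mul inv x y) z.

(* Write [A = [x1,x2]], [B = [x1 g1, x2 g2]], [C = [x1 g1, x2]] and
   [D = [x1, x2 g2]].  Expanding commutators gives the identity
   [[g1,g2] = (A^g2 D^-1)^g1 B (C^-1)^g2].  Each hypothesis says that one of
   [A], [B], [C], [D] commutes with [x3] or with some [x3 g_i], and commuting
   with [x3] and with [x3 g_i] means commuting with [g_i].  So [A] commutes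
   with [g1], [g2], [g3], [C] with [g2], [g3], [D] with [g1], [g3] and [B]
   with [g3]; the conjugations then disappear, [[g1,g2] = A D^-1 B C^-1], and
   this product commutes with [g3]. *)

Set Implicit Arguments.
Unset Strict Implicit.

Section GroupCalculus.

Variables (T : Type) (mul : T -> T -> T) (one : T) (inv : T -> T).
Hypothesis HG : is_group mul one inv.

Declare Scope group_scope.
Local Open Scope group_scope.
Local Notation "x * y" := (mul x y) : group_scope.
Local Notation "x ^-1" := (inv x) (at level 3, left associativity, format "x ^-1") : group_scope.
Local Notation "[ x , y ]" := (comm mul inv x y) : group_scope.

Definition conj (x y : T) : T := y^-1 * (x * y).

Definition commute (x y : T) : Prop := x * y = y * x.

Lemma mulgA (x y z : T) : x * (y * z) = x * y * z.
Proof. apply HG. Qed.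

Lemma mul1g (x : T) : one * x = x.
Proof. apply HG. Qed.

Lemma mulg1 (x : T) : x * one = x.
Proof. apply HG. Qed.

Lemma mulVg (x : T) : x^-1 * x = one.
Proof. apply HG. Qed.

Lemma mulgV (x : T) : x * x^-1 = one.
Proof. apply HG. Qed.

Lemma mulKg (x y : T) : x^-1 * (x * y) = y.
Proof. now rewrite mulgA, mulVg, mul1g. Qed.

Lemma mulKVg (x y : T) : x * (x^-1 * y) = y.
Proof. now rewrite mulgA, mulgV, mul1g. Qed.

Lemma mulgI (x y z : T) : x * y = x * z -> y = z.
Proof. intros E. now rewrite <- (mulKg x y), E, mulKg. Qed.

Lemma invg_unique (x y : T) : x * y = one -> x^-1 = y.
Proof. intros E. apply (mulgI (x := x)). now rewrite mulgV. Qed.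

Lemma invgK (x : T) : x^-1^-1 = x.
Proof. apply invg_unique, mulVg. Qed.

Lemma invMg (x y : T) : (x * y)^-1 = y^-1 * x^-1.
Proof. apply invg_unique. now rewrite <- mulgA, mulKVg, mulgV. Qed.

Ltac group_norm :=
  repeat rewrite ?invMg, ?invgK, <- ?mulgA, ?mulKg, ?mulKVg, ?mulVg, ?mulgV,
    ?mul1g, ?mulg1.

Lemma commg_mul (x y : T) : x * y = y * x * [x, y].
Proof. unfold comm. now group_norm. Qed.

Lemma comm_eq1 (x y : T) : [x, y] = one <-> commute x y.
Proof.
  unfold commute. split; intros E.
  - now rewrite commg_mul, E, mulg1.
  - unfold comm. now rewrite <- !mulgA, E, mulKg, mulVg.
Qed.

Lemma commute_mulr_cancel (a z g : T) :
  commute a z -> commute a (z * g) -> commute a g.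
Proof.
  unfold commute. intros Haz Hazg. apply (mulgI (x := z)).
  rewrite 2!mulgA, <- Haz, <- mulgA. exact Hazg.
Qed.

Lemma commuteV (a g : T) : commute a g -> commute a^-1 g.
Proof.
  unfold commute. intros E.
  apply (mulgI (x := a)).
  now rewrite mulKVg, mulgA, E, <- mulgA, mulgV, mulg1.
Qed.

Lemma commuteM (a b g : T) :
  commute a g -> commute b g -> commute (a * b) g.
Proof.
  unfold commute. intros Ea Eb.
  now rewrite <- mulgA, Eb, mulgA, Ea, mulgA.
Qed.

Lemma conj_id (x y : T) : commute x y -> conj x y = x.
Proof. unfold conj, commute. intros E. now rewrite E, mulKg. Qed.

Lemma commg_decomposition (x1 x2 g1 g2 : T) :
  [g1, g2] =
  conj (conj [x1, x2] g2 * [x1, x2 * g2]^-1) g1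
    * [x1 * g1, x2 * g2] * conj [x1 * g1, x2]^-1 g2.
Proof. unfold conj, comm. now group_norm. Qed.

End GroupCalculus.

Theorem lemma2p1 (T : Type) (mul : T -> T -> T) (one : T) (inv : T -> T)
  (HG : is_group mul one inv) (x1 x2 x3 g1 g2 g3 : T) :
  let c := comm3 mul inv in
  c x1 x2 x3 = one ->
  c (mul x1 g1) (mul x2 g2) (mul x3 g3) = one ->
  c (mul x1 g1) (mul x2 g2) x3 = one ->
  c (mul x1 g1) x2 (mul x3 g2) = one ->
  c (mul x1 g1) x2 x3 = one ->
  c (mul x1 g1) x2 (mul x3 g3) = one ->
  c x1 x2 (mul x3 g1) = one ->
  c x1 (mul x2 g2) (mul x3 g1) = one ->
  c x1 (mul x2 g2) x3 = one ->
  c x1 x2 (mul x3 g2) = one ->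
  c x1 (mul x2 g2) (mul x3 g3) = one ->
  c x1 x2 (mul x3 g3) = one ->
  c g1 g2 g3 = one.
Proof.
  intros c h1 h2 h3 h4 h5 h6 h7 h8 h9 h10 h11 h12.
  unfold c, comm3 in *.
  apply (comm_eq1 HG) in h1, h2, h3, h4, h5, h6, h7, h8, h9, h10, h11, h12.
  assert (Ag1 := commute_mulr_cancel HG h1 h7).
  assert (Ag2 := commute_mulr_cancel HG h1 h10).
  assert (Ag3 := commute_mulr_cancel HG h1 h12).
  assert (Bg3 := commute_mulr_cancel HG h3 h2).
  assert (Cg2 := commute_mulr_cancel HG h5 h4).
  assert (Cg3 := commute_mulr_cancel HG h5 h6).
  assert (Dg1 := commute_mulr_cancel HG h9 h8).
  assert (Dg3 := commute_mulr_cancel HG h9 h11).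
  apply (comm_eq1 HG).
  rewrite (commg_decomposition HG x1 x2 g1 g2).
  rewrite (conj_id HG Ag2), (conj_id HG (commuteV HG Cg2)),
    (conj_id HG (commuteM HG Ag1 (commuteV HG Dg1))).
  exact (commuteM HG (commuteM HG (commuteM HG Ag3 (commuteV HG Dg3)) Bg3)
    (commuteV HG Cg3)).
Qed.
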